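(* Let $r\ge 1$ and $s\ge 1$ be integers and $n\ge 1$. Let $\lambda=\lambda(T_r(n))$, $\mu=\lambda(\overline{K}_s\vee T_r(n))$ and $d_0=2\bigl(e(T_r(n))-1\bigr)/n$. Then \[ \frac{n(\mu+d_0)}{\mu^2-\lambda^2}<\frac{\mu}{s}. \]
   Context: $\lambda(\cdot)$ is the spectral radius of the adjacency matrix and $e(\cdot)$ the number of edges. $T_r(n)$ is the complete $r$-partite graph on $n$ vertices with part sizes differing by at most one (for $r=1$, the edgeless graph). $\overline{K}_s$ is the edgeless graph on $s$ vertices and $\vee$ denotes the join. *)

From HB Require Import structures.
From mathcomp Require Import all_boot all_order all_algebra all_field.
Set Implicit Arguments. Unset Strict Implicit. Unset Printing Implicit Defensive.
Import Order.TTheory GRing.Theory Num.Theory.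
Local Open Scope ring_scope.

Definition adjmx (m : nat) (e : rel 'I_m) : 'M[algC]_m :=
  \matrix_(i, j) (e i j)%:R.

Definition is_spectral_radius (m : nat) (A : 'M[algC]_m) (rho : algC) : Prop :=
  (exists2 z : algC, eigenvalue A z & `|z| = rho) /\
  (forall z : algC, eigenvalue A z -> `|z| <= rho).

(* Turan graph T_r(n) on 'I_n: vertex i lies in part (i mod r); the parts
   have sizes differing by at most one; for r = 1 it is edgeless. *)
Definition turan_adj (r n : nat) : rel 'I_n :=
  fun i j => (i %% r)%N != (j %% r)%N.

Definition nedges (m : nat) (e : rel 'I_m) : nat :=
  #|[set p : 'I_m * 'I_m | (p.1 < p.2)%N && e p.1 p.2]|.

(* Join  \overline{K}_s \vee T_r(n)  on 'I_(s + n): vertices < s form the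
   independent set \overline{K}_s, vertices k >= s form T_r(n) via k - s. *)
Definition join_indep_turan_adj (s r n : nat) : rel 'I_(s + n) :=
  fun i j =>
    if (i < s)%N then (s <= j)%N
    else if (j < s)%N then true
    else ((i - s) %% r)%N != ((j - s) %% r)%N.

Arguments turan_adj r n : clear implicits.
Arguments join_indep_turan_adj s r n : clear implicits.

From HB Require Import structures.
From mathcomp Require Import all_boot all_order all_algebra all_field.
From mathcomp Require Import ring lra zify.
Set Implicit Arguments. Unset Strict Implicit. Unset Printing Implicit Defensive.
Import Order.TTheory GRing.Theory Num.Theory.
Local Open Scope ring_scope.

(* Write n = r a + t with 0 <= t < r, so that T_r(n) has t parts of size a + 1
   and r - t parts of size a, and let S(x) = sum_k n_k / (x + n_k) over the part
   sizes n_k.  The positive vector equal to 1 / (x + n_k) on part k is an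
   eigenvector of T_r(n) for x when S(x) = 1; extended by 1 / (x + s) on the
   independent set, it is an eigenvector of K_s v T_r(n) for x when
   S(x) = x / (x + s).  A symmetric nonnegative matrix with a positive
   eigenvector has that eigenvalue as spectral radius.  Clearing denominators,
   lambda is the largest root of x^2 = c x + k, where c = n - 2a - 1 and
   k = (r - 1) a (a + 1), and mu > lambda satisfies
   s (n mu + r a (a + 1)) = mu (mu - lambda) (mu + lambda - c).  As
   2 e(T_r(n)) = n c + r a (a + 1), these relations reduce the claim to
   c (2e - n lambda) + 2 (2 lambda - c) >= 0.  This holds because
   2e <= n lambda, and, when c > 0, because lambda times the left-hand side is
   c (2 + r a (a + 1)) lambda - (n c - 4) k, which is nonnegative by
   2e <= n lambda again and a polynomial inequality in the integers a, t, r. *)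

Definition turan_part_size (r n k : nat) : nat := (n %/ r + (k < n %% r))%N.

Lemma turan_part_sizeS (r n k : nat) : (k < r)%N ->
  turan_part_size r n.+1 k = (turan_part_size r n k + (k == n %% r))%N.
Proof.
move=> kr; have r_gt0 : (0 < r)%N by case: r kr.
rewrite /turan_part_size; have := ltn_pmod n r_gt0; have := ltn_pmod n.+1 r_gt0.
have := divn_eq n r; have := divn_eq n.+1 r.
by case: ltngtP => ?; case: ltngtP => ? /=; nia.
Qed.

Lemma turan_part_size_gt0 (r n j : nat) : (j < n)%N ->
  (0 < turan_part_size r n (j %% r))%N.
Proof.
rewrite /turan_part_size; case: (posnP r) => [-> | r_gt0] jn.
  by rewrite divn0 modn0 jn addn1.
case: (posnP (n %/ r)) => [nr0|nr_gt0]; last by rewrite addn_gt0 nr_gt0.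
have nr : (n < r)%N by rewrite -[r]mul1n -ltn_divLR // nr0.
by rewrite nr0 (modn_small nr) (modn_small (ltn_trans jn nr)) jn.
Qed.

Lemma sum_ord_mod (V : nmodType) (r n : nat) (g : nat -> V) : (0 < r)%N ->
  \sum_(i < n) g (i %% r)%N = \sum_(k < r) g k *+ turan_part_size r n k.
Proof.
move=> r_gt0; elim: n => [|n IHn].
  by rewrite big_ord0 big1 // => k _; rewrite /turan_part_size div0n mod0n ltn0.
have nr := ltn_pmod n r_gt0.
rewrite big_ord_recr /= IHn (bigD1 (Ordinal nr)) //= [RHS](bigD1 (Ordinal nr)) //=.
rewrite turan_part_sizeS // eqxx addn1 mulrSr -!addrA; congr (_ + _).
rewrite addrC; congr (_ + _); apply: eq_bigr => k /negbTE nk.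
by rewrite turan_part_sizeS // -val_eqE /= in nk *; rewrite nk addn0.
Qed.

Lemma sum_turan_part_size (R : pzSemiRingType) (r n : nat) : (0 < r)%N ->
  \sum_(k < r) (turan_part_size r n k)%:R = n%:R :> R.
Proof.
move=> r_gt0; have := sum_ord_mod n (fun=> 1 : R) r_gt0.
by rewrite sumr_const card_ord => ->.
Qed.

Lemma sum_ord_ltn (V : nmodType) (r t : nat) (F : bool -> V) : (t <= r)%N ->
  \sum_(k < r) F (k < t)%N = F true *+ t + F false *+ (r - t).
Proof.
move=> tr; rewrite -(big_mkord xpredT (fun k => F (k < t)%N)).
rewrite (big_cat_nat (leq0n t) tr) /= (eq_big_nat _ _ (F2 := fun=> F true)).
  rewrite (eq_big_nat _ _ (m := t) (n := r) (F2 := fun=> F false)).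
    by rewrite !sumr_const_nat subn0.
  by move=> i /andP[ti _]; rewrite ltnNge ti.
by move=> i /andP[_ ->].
Qed.

Lemma natr_divn_eq (R : pzSemiRingType) (n r : nat) :
  n%:R = r%:R * (n %/ r)%:R + (n %% r)%:R :> R.
Proof. by rewrite {1}(divn_eq n r) mulnC natrD natrM. Qed.

Lemma turan_adj_sym r n : symmetric (turan_adj r n).
Proof. by move=> i j; rewrite /turan_adj eq_sym. Qed.

Lemma turan_adj_sum (R : pzRingType) (r n : nat) (w : nat -> R) (j : 'I_n) :
  (0 < r)%N ->
  \sum_(i < n) w (i %% r)%N * (turan_adj r n i j)%:R =
  \sum_(k < r) w k *+ turan_part_size r n k
  - w (j %% r)%N *+ turan_part_size r n (j %% r).
Proof.
move=> r_gt0; rewrite (sum_ord_mod n (fun k => w k * (k != j %% r)%N%:R)) //.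
have jr := ltn_pmod j r_gt0.
rewrite (bigD1 (Ordinal jr)) //= [in RHS](bigD1 (Ordinal jr)) //= eqxx mulr0 mul0rn.
rewrite add0r addrAC subrr add0r; apply: eq_bigr => k /negbTE nk.
by rewrite -val_eqE /= in nk; rewrite nk mulr1.
Qed.

Lemma nedges_sym m (e : rel 'I_m) : symmetric e -> irreflexive e ->
  (2 * nedges e = \sum_i \sum_j e i j)%N.
Proof.
move=> e_sym e_irr.
have cardE (P : pred ('I_m * 'I_m)) : #|[set p | P p]| = (\sum_i \sum_j P (i, j))%N.
  rewrite -sum1_card pair_big /= big_mkcond /=.
  by apply: eq_bigr => -[i j] _; rewrite inE; case: (P (i, j)).
have eE i j : e i j = ((i < j) && e i j + (j < i) && e i j)%N :> nat.
  by case: ltngtP => [_|_|/val_inj->]; rewrite ?e_irr //; case: (e i j).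
rewrite /nedges cardE mul2n -addnn.
under [RHS]eq_bigr do rewrite (eq_bigr _ (fun j _ => eE _ j)) big_split.
rewrite big_split /=; congr addn.
by rewrite exchange_big; apply: eq_bigr => i _; apply: eq_bigr => j _; rewrite e_sym.
Qed.

Lemma nedges_turan (R : comPzRingType) r n : (0 < r)%N ->
  (2 * nedges (turan_adj r n))%:R =
    n%:R * (n%:R - 2 * (n %/ r)%:R - 1) + r%:R * ((n %/ r)%:R * ((n %/ r)%:R + 1)) :> R.
Proof.
move=> r_gt0; rewrite nedges_sym; last 2 first.
- exact: turan_adj_sym.
- by move=> i; rewrite /turan_adj eqxx.
rewrite natr_sum; under eq_bigr => i _.
  rewrite natr_sum; under eq_bigr do rewrite turan_adj_sym -[_%:R]mul1r.
  rewrite (turan_adj_sum (fun=> 1)) // sum_turan_part_size //.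
  over.
rewrite /= sumrB sumr_const card_ord.
rewrite (sum_ord_mod n (fun k => (turan_part_size r n k)%:R)) // /turan_part_size.
have t_le_r : (n %% r <= r)%N := ltnW (ltn_pmod n r_gt0).
rewrite (sum_ord_ltn (fun b => (n %/ r + b)%:R *+ (n %/ r + b))) // addn1 addn0.
rewrite -[n%:R *+ n]mulr_natr -[_ *+ (n %% r)]mulr_natr -[_ *+ (r - _)]mulr_natr.
rewrite -[_ *+ (n %/ r).+1]mulr_natr -[_ *+ (n %/ r)]mulr_natr natrB // -addn1 natrD.
by rewrite [n%:R](natr_divn_eq _ n r); ring.
Qed.

Definition turan_secular (F : fieldType) (r n : nat) (x : F) : F :=
  \sum_(k < r) (turan_part_size r n k)%:R / (x + (turan_part_size r n k)%:R).

Lemma turan_secularE (F : fieldType) r n (x : F) : (0 < r)%N ->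
  turan_secular r n x =
    (n %% r)%:R * ((n %/ r)%:R + 1) / (x + ((n %/ r)%:R + 1))
    + (r%:R - (n %% r)%:R) * (n %/ r)%:R / (x + (n %/ r)%:R).
Proof.
move=> r_gt0; have t_le_r : (n %% r <= r)%N := ltnW (ltn_pmod n r_gt0).
rewrite /turan_secular /turan_part_size.
rewrite (sum_ord_ltn (fun b => (n %/ r + b)%:R / (x + (n %/ r + b)%:R))) // addn1 addn0.
rewrite -[_ *+ (n %% r)]mulr_natl -[_ *+ (r - _)]mulr_natl natrB // -addn1 natrD.
by rewrite !mulrA.
Qed.

Lemma fmorph_turan_secular (F K : fieldType) (f : {rmorphism F -> K}) r n (x : F) :
  f (turan_secular r n x) = turan_secular r n (f x).
Proof.
rewrite rmorph_sum; apply: eq_bigr => k _.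
by rewrite fmorph_div [f (_ + _)]rmorphD !rmorph_nat.
Qed.

Lemma eigenvalue_norm_le (R : numFieldType) m (A : 'M[R]_m) (p : 'rV[R]_m) (c z : R) :
  A^T = A -> (forall i j, 0 <= A i j) -> (forall i, 0 < p 0 i) ->
  p *m A = c *: p -> eigenvalue A z -> `|z| <= c.
Proof.
move=> Asym A_ge0 p_gt0 pA /eigenvalueP[v vA v_neq0].
have vA_le j : `|z| * `|v 0 j| <= \sum_i `|v 0 i| * A i j.
  rewrite -normrM; have /rowP/(_ j) := vA; rewrite !mxE => <-.
  apply: le_trans (ler_norm_sum _ _ _) _; apply: ler_sum => i _.
  by rewrite normrM (ger0_norm (A_ge0 i j)).
have Ap i : \sum_j A i j * p 0 j = c * p 0 i.
  have /rowP/(_ i) := pA; rewrite !mxE => <-.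
  by apply: eq_bigr => j _; rewrite -{1}Asym mxE mulrC.
have [j vj_neq0] : exists j, v 0 j != 0.
  apply/existsP; apply: contraR v_neq0 => /existsPn v0.
  by apply/eqP/rowP => j; rewrite mxE; apply/eqP/negPn.
pose W := \sum_j `|v 0 j| * p 0 j.
have W_gt0 : 0 < W.
  rewrite /W (bigD1 j) //= ltr_pwDl ?mulr_gt0 ?normr_gt0 //.
  by apply: sumr_ge0 => i _; rewrite mulr_ge0 // ltW.
rewrite -(ler_pM2r W_gt0) /W mulr_sumr.
apply: (@le_trans _ _ (\sum_j \sum_i `|v 0 i| * A i j * p 0 j)).
  by apply: ler_sum => j' _; rewrite -mulr_suml mulrA ler_pM2r.
rewrite exchange_big mulr_sumr; apply: ler_sum => i _ /=.
under eq_bigr do rewrite -mulrA.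
by rewrite -mulr_sumr Ap mulrCA mulrA.
Qed.

Lemma perron_spectral_radius m (A : 'M[algC]_m) (p : 'rV_m) (c rho : algC) :
  (0 < m)%N -> A^T = A -> (forall i j, 0 <= A i j) -> (forall i, 0 < p 0 i) ->
  p *m A = c *: p -> 0 <= c -> is_spectral_radius A rho -> rho = c.
Proof.
move=> m_gt0 Asym A_ge0 p_gt0 pA c_ge0 [[z zA <-] rho_max].
apply/eqP; rewrite eq_le (eigenvalue_norm_le Asym A_ge0 p_gt0 pA zA) /=.
rewrite -(ger0_norm c_ge0) rho_max //; apply/eigenvalueP; exists p => //.
by apply/eqP => /rowP/(_ (Ordinal m_gt0)); rewrite mxE; apply/eqP/lt0r_neq0.
Qed.

Lemma adjmx_tr m (e : rel 'I_m) : symmetric e -> (adjmx e)^T = adjmx e.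
Proof. by move=> e_sym; apply/matrixP => i j; rewrite !mxE e_sym. Qed.

Lemma adjmx_ge0 m (e : rel 'I_m) i j : 0 <= adjmx e i j.
Proof. by rewrite mxE ler0n. Qed.

Definition turan_perron (r n : nat) (x : algC) : 'rV[algC]_n :=
  \row_i (x + (turan_part_size r n (i %% r))%:R)^-1.

Lemma turan_perron_gt0 r n (x : algC) i : 0 <= x -> 0 < turan_perron r n x 0 i.
Proof. by move=> x_ge0; rewrite mxE invr_gt0 ltr_wpDl // ltr0n turan_part_size_gt0. Qed.

Lemma turan_perron_sum r n (x : algC) : (0 < r)%N ->
  \sum_i turan_perron r n x 0 i = turan_secular r n x.
Proof.
move=> r_gt0; under eq_bigr do rewrite mxE.
rewrite (sum_ord_mod n (fun k => (x + (turan_part_size r n k)%:R)^-1)) //.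
by apply: eq_bigr => k _; rewrite mulr_natl.
Qed.

Lemma turan_perron_mulmx r n (x : algC) : (0 < r)%N -> 0 <= x ->
  turan_perron r n x *m adjmx (turan_adj r n) =
  (turan_secular r n x - 1) *: const_mx 1 + x *: turan_perron r n x.
Proof.
move=> r_gt0 x_ge0; apply/rowP => j; rewrite !mxE; under eq_bigr do rewrite !mxE.
rewrite (turan_adj_sum (fun k => (x + (turan_part_size r n k)%:R)^-1)) // mulr1.
rewrite /turan_secular; under [in RHS]eq_bigr do rewrite mulr_natl.
have p_gt0 : 0 < x + (turan_part_size r n (j %% r))%:R.
  by rewrite ltr_wpDl // ltr0n turan_part_size_gt0.
set p := (turan_part_size r n (j %% r))%:R in p_gt0 *; rewrite -mulr_natl -/p.
by set S := \sum_(k < r) _; field; rewrite gt_eqF.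
Qed.

Lemma turan_spectral_radius r n (x lam : algC) : (0 < r)%N -> (0 < n)%N -> 0 <= x ->
  turan_secular r n x = 1 -> is_spectral_radius (adjmx (turan_adj r n)) lam -> lam = x.
Proof.
move=> r_gt0 n_gt0 x_ge0 Sx1.
apply: (perron_spectral_radius (p := turan_perron r n x) n_gt0) => //.
- exact/adjmx_tr/turan_adj_sym.
- exact: adjmx_ge0.
- by move=> i; apply: turan_perron_gt0.
- by rewrite turan_perron_mulmx // Sx1 subrr scale0r add0r.
Qed.

Lemma join_adj_block s r n :
  adjmx (join_indep_turan_adj s r n) =
  block_mx 0 (const_mx 1) (const_mx 1) (adjmx (turan_adj r n)).
Proof.
apply/matrixP => i j; rewrite !mxE /join_indep_turan_adj.
case: splitP => i' iE; rewrite !mxE; case: splitP => j' jE /=; rewrite !mxE //=.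
all: rewrite ?iE ?jE.
- by rewrite leqNgt ltn_ord.
- by rewrite leq_addr.
- by rewrite !addKn.
Qed.

Definition join_perron (s r n : nat) (x : algC) : 'rV[algC]_(s + n) :=
  row_mx (const_mx (x + s%:R)^-1) (turan_perron r n x).

Lemma join_perron_mulmx s r n (x : algC) : (0 < r)%N -> 0 <= x -> x + s%:R != 0 ->
  turan_secular r n x = x / (x + s%:R) ->
  join_perron s r n x *m adjmx (join_indep_turan_adj s r n) = x *: join_perron s r n x.
Proof.
move=> r_gt0 x_ge0 xs_neq0 Sx.
rewrite join_adj_block mul_row_block mulmx0 add0r scale_row_mx turan_perron_mulmx //.
congr row_mx; apply/rowP => j; rewrite !mxE.
  by under eq_bigr do rewrite [const_mx _ _ _]mxE mulr1; rewrite turan_perron_sum // Sx.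
under eq_bigr do rewrite !mxE mulr1.
rewrite sumr_const card_ord Sx mulr1 addrA -[RHS]add0r -mulr_natr; congr (_ + _).
by field.
Qed.

Lemma join_spectral_radius s r n (x mu : algC) : (0 < r)%N -> (0 < s)%N -> 0 < x ->
  turan_secular r n x = x / (x + s%:R) ->
  is_spectral_radius (adjmx (join_indep_turan_adj s r n)) mu -> mu = x.
Proof.
move=> r_gt0 s_gt0 x_gt0 Sx.
have xs_gt0 : 0 < x + s%:R by rewrite ltr_wpDr ?ler0n.
apply: (perron_spectral_radius (p := join_perron s r n x)) (ltW x_gt0).
- by rewrite addn_gt0 s_gt0.
- apply/adjmx_tr => i j; rewrite /join_indep_turan_adj.
  by case: (ltnP i s) => ?; case: (ltnP j s) => ? //=; rewrite eq_sym.
- exact: adjmx_ge0.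
- move=> i; rewrite mxE; case: splitP => i' _; first by rewrite mxE invr_gt0.
  exact: turan_perron_gt0 (ltW x_gt0).
- by apply: join_perron_mulmx; rewrite // ?ltW ?gt_eqF.
Qed.

Lemma turan_gap_poly_le (a t u : nat) :
  (4*t^2 + a*t*u + 5*a*t^2 <= 2*t + 2*t^3 + 3*a*t + 5*a*t^2*u + 6*a*t^3)%N.
Proof. by case: t => [|t]; [rewrite !muln0 !mul0n | nia]. Qed.

Section TuranRoots.
Variables (R : rcfType) (a t r n : R).
Hypotheses (a_ge0 : 0 <= a) (t_ge0 : 0 <= t) (t_lt_r : t + 1 <= r).
Hypotheses (nE : n = r * a + t) (n_ge1 : 1 <= n).

(* a and t play the roles of n %/ r and n %% r; e2 is 2 e(T_r(n)). *)
Local Notation c := (n - 2 * a - 1).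
Local Notation A := (a * (a + 1)).
Local Notation k := ((r - 1) * A).
Local Notation e2 := (n * c + r * A).
Local Notation gap := (c * (2 + r * A) * e2 - n * (n * c - 4) * k).
Local Notation secular x := (t * (a + 1) / (x + (a + 1)) + (r - t) * a / (x + a)).

(* lra and nra ignore section hypotheses: proofs first move the ones they need
   into the context. *)
Let k_ge0 : 0 <= k.
Proof. by move: a_ge0 t_ge0 t_lt_r => *; nra. Qed.

Lemma secular_mulE x : 0 <= x -> (x + a) * (x + a + 1) * secular x = n * x + r * A.
Proof.
move=> x_ge0; have := a_ge0; have [xa0|xa_neq0] := eqVneq (x + a) 0 => a0.
  have [-> ->] : x = 0 /\ a = 0 by lra.
  by rewrite nE !(mul0r, mulr0, add0r, addr0).
by rewrite nE; field; rewrite xa_neq0 /=; apply: lt0r_neq0; lra.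
Qed.

Lemma secular_denomE l x : l ^+ 2 = c * l + k ->
  (x + a) * (x + a + 1) - (n * x + r * A) = (x - l) * (x + l - c).
Proof.
move=> lE; transitivity (x ^+ 2 - c * x - (l ^+ 2 - c * l)); last by ring.
by rewrite lE nE; ring.
Qed.

Lemma turan_root_exists :
  exists l, [/\ 0 <= l, c <= 2 * l, l ^+ 2 = c * l + k & secular l = 1].
Proof.
pose l := (c + Num.sqrt (c ^+ 2 + 4 * k)) / 2.
have sq_ge0 : 0 <= c ^+ 2 + 4 * k by rewrite addr_ge0 ?sqr_ge0 // mulr_ge0 // k_ge0.
have sqE := sqr_sqrtr sq_ge0; have sq0 := sqrtr_ge0 (c ^+ 2 + 4 * k).
have /ler_normlP[cN_le c_le] : `|c| <= Num.sqrt (c ^+ 2 + 4 * k).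
  by rewrite -sqrtr_sqr ler_sqrt // lerDl mulr_ge0 // k_ge0.
have lE : l ^+ 2 = c * l + k by rewrite /l; nra.
have l_ge0 : 0 <= l by rewrite /l; lra.
exists l; split => //; first by rewrite /l; lra.
have [a0|a_neq0] := eqVneq a 0.
  have t_ge1 : 1 <= t by move: n_ge1; rewrite nE a0 mulr0 add0r.
  have -> : l = t - 1.
    rewrite /l nE a0 !(mulr0, mul0r, add0r, addr0, subr0) sqrtr_sqr ger0_norm; last lra.
    by field.
  by rewrite a0 mulr0 mul0r addr0 add0r mulr1 subrK divff // gt_eqF //; lra.
have D_gt0 : 0 < (l + a) * (l + a + 1).
  by have := a_ge0; rewrite le_eqVlt eq_sym (negbTE a_neq0) /= => a_gt0; nra.
apply: (mulfI (lt0r_neq0 D_gt0)); rewrite secular_mulE // mulr1.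
by apply/eqP; rewrite eq_sym -subr_eq0 (secular_denomE l lE) subrr mul0r.
Qed.

Lemma join_root_exists s l : 1 <= s -> 0 <= l -> c <= 2 * l -> l ^+ 2 = c * l + k ->
  exists m, [/\ l < m, secular m = m / (m + s)
              & s * (n * m + r * A) = m * (m - l) * (m + l - c)].
Proof.
move=> s_ge1 l_ge0 c_le lE; move: a_ge0 t_ge0 t_lt_r n_ge1 k_ge0 => a0 t0 tr n1 k0.
have rA_ge0 : 0 <= r * A by nra.
pose Q := 'X * ('X - l%:P) * ('X + (l - c)%:P) - s%:P * (n%:P * 'X + (r * A)%:P).
have QE x : Q.[x] = x * (x - l) * (x + l - c) - s * (n * x + r * A).
  by rewrite !hornerE.
(* The offset d makes (x0 - l) (x0 + l - c) <= 1, so that Q.[x0] <= 0. *)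
pose d := (2 * l - c + 1)^-1; pose x0 := l + d; pose x1 := l + 1 + s * (n + r * A).
have d_gt0 : 0 < d by rewrite invr_gt0; lra.
have dE : d * (2 * l - c + 1) = 1 by rewrite mulVf //; apply: lt0r_neq0; lra.
have d_le1 : d <= 1 by rewrite invr_le1 ?unitfE; try apply: lt0r_neq0; lra.
clearbody d.
have srA_ge0 : 0 <= s * (r * A) by rewrite mulr_ge0 //; lra.
have Qx0 : Q.[x0] <= 0.
  have x0_ge0 : 0 <= x0 by rewrite /x0; lra.
  have : x0 * (x0 - l) * (x0 + l - c) <= x0.
    by rewrite -mulrA -[leRHS]mulr1 ler_wpM2l // /x0; nra.
  have : x0 <= s * n * x0 by rewrite ler_peMl //; nra.
  by rewrite QE; lra.
have Qx1 : 0 <= Q.[x1].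
  have x1_ge1 : 1 <= x1 by rewrite /x1; nra.
  have : x1 * (x1 - l) <= x1 * (x1 - l) * (x1 + l - c).
    by rewrite ler_peMr ?mulr_ge0 /x1; nra.
  have : s * (n * x1 + r * A) <= x1 * (x1 - l).
    have -> : x1 - l = 1 + s * n + s * (r * A) by rewrite /x1; ring.
    nra.
  by rewrite QE; lra.
have x01 : x0 <= x1 by rewrite /x0 /x1; nra.
have [m /andP[x0m _] /rootP] := poly_ivt x01 (introT andP (conj Qx0 Qx1)).
rewrite QE => /eqP; rewrite subr_eq0 eq_sym => /eqP mE.
have l_lt_m : l < m by rewrite /x0 in x0m; lra.
exists m; split => //.
have D_gt0 : 0 < (m + a) * (m + a + 1) by nra.
have ms_neq0 : m + s != 0 by rewrite gt_eqF //; lra.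
apply: (mulfI (lt0r_neq0 D_gt0)); rewrite secular_mulE; last lra.
apply: (mulIf ms_neq0); rewrite -mulrA divfK //.
by rewrite -[_ * (m + a + 1)](subrK (n * m + r * A)) (secular_denomE _ lE); lra.
Qed.

Lemma avg_degree_le_root l : 0 <= l -> c <= 2 * l -> l ^+ 2 = c * l + k -> e2 <= n * l.
Proof.
move=> l_ge0 c_le lE; move: a_ge0 t_ge0 t_lt_r n_ge1 => a0 t0 tr n1.
rewrite leNgt; apply/negP => lt_nl.
have fE : (e2 - n * l) * (e2 + n * l - c * n) = A * (t * (t - r)).
  transitivity (e2 ^+ 2 - c * n * e2 - n ^+ 2 * k - n ^+ 2 * (l ^+ 2 - c * l - k)).
    by ring.
  by rewrite lE nE; ring.
have : 0 < (e2 - n * l) * (e2 + n * l - c * n) by rewrite mulr_gt0 //; nra.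
by rewrite fE ltNge mulr_ge0_le0 //; nra.
Qed.

Lemma root_gap_ge0 l : 0 <= l -> c <= 2 * l -> l ^+ 2 = c * l + k -> 0 <= gap ->
  0 <= c * (e2 - n * l) + 2 * (2 * l - c).
Proof.
move=> l_ge0 c_le lE gap_ge0; have e2_le := avg_degree_le_root l_ge0 c_le lE.
have [c_le0|c_gt0] := lerP c 0; first by nra.
have nl_gt0 : 0 < n * l by move: n_ge1 => n1; rewrite mulr_gt0 //; lra.
rewrite -(pmulr_rge0 _ nl_gt0).
have -> : n * l * (c * (e2 - n * l) + 2 * (2 * l - c)) =
    c * (2 + r * A) * (n * l) - n * (n * c - 4) * k.
  transitivity (c * (2 + r * A) * (n * l) - n * (n * c - 4) * k
                + n * (4 - n * c) * (l ^+ 2 - c * l - k)); first by ring.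
  by rewrite lE; ring.
have : c * (2 + r * A) * e2 <= c * (2 + r * A) * (n * l).
  have rA_ge0 : 0 <= r * A by move: a_ge0 t_ge0 t_lt_r => *; nra.
  by rewrite ler_wpM2l // (mulr_ge0 (ltW c_gt0)) // addr_ge0.
lra.
Qed.

Lemma gap_ge0_nat (a' t' r' : nat) :
  a = a'%:R -> t = t'%:R -> r = r'%:R -> (t' < r')%N -> 0 <= gap.
Proof.
move=> aE tE rE tr; have {}rE : r = (t' + 1 + (r' - t'.+1))%:R by rewrite rE addn1 subnKC.
set u' := (r' - t'.+1)%N in rE.
have -> : gap =
  ((2*t' + 2*t'^3 + 3*a'*t' + 5*a'*t'^2*u' + 6*a'*t'^3)%N%:R
   - (4*t'^2 + a'*t'*u' + 5*a'*t'^2)%N%:R) +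
  (2*a'^2*u' + 2*a'^2*u'^2 + 4*a'^2*t' + 7*a'^2*t'*u' + 5*a'^2*t'*u'^2 + 2*a'^2*t'^2
   + 10*a'^2*t'^2*u' + 6*a'^2*t'^3 + 2*a'^3*u' + 4*a'^3*u'^2 + 2*a'^3*u'^3 + 3*a'^3*t'
   + 8*a'^3*t'*u' + 5*a'^3*t'*u'^2 + 3*a'^3*t'^2 + 5*a'^3*t'^2*u' + 2*a'^3*t'^3)%N%:R.
  by rewrite nE aE tE rE !natrD !natrM ?natrX; ring.
by rewrite addr_ge0 // subr_ge0 ler_nat turan_gap_poly_le.
Qed.

Lemma join_root_ineq s l m : 1 <= s -> 0 <= l -> c <= 2 * l -> l ^+ 2 = c * l + k ->
  l < m -> s * (n * m + r * A) = m * (m - l) * (m + l - c) -> 0 <= gap ->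
  n * (m + (e2 - 2) / n) / (m ^+ 2 - l ^+ 2) < m / s.
Proof.
move=> s_ge1 l_ge0 c_le lE l_lt_m mE gap_ge0.
have W_ge0 := root_gap_ge0 l_ge0 c_le lE gap_ge0.
set h := m * (m - l) - s * n.
have hE : h * (m + l - c) = s * (e2 - n * l) by rewrite /h; lra.
have h_gt0 : 0 < c * h + 2 * s.
  have mlc_gt0 : 0 < m + l - c by lra.
  rewrite -(pmulr_lgt0 _ mlc_gt0) mulrDl -mulrA hE.
  have : 0 < 2 * s * (m - l) by rewrite mulr_gt0 ?subr_gt0 //; lra.
  have : 0 <= s * (c * (e2 - n * l) + 2 * (2 * l - c)) by rewrite mulr_ge0 //; lra.
  lra.
have n_gt0 : 0 < n by move: n_ge1 => *; lra.
have -> : n * (m + (e2 - 2) / n) = n * m + e2 - 2 by field; rewrite gt_eqF.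
have m2l2_gt0 : 0 < m ^+ 2 - l ^+ 2 by rewrite subr_gt0 ltr_pXn2r // ?nnegrE; lra.
rewrite ltr_pdivrMr // mulrAC ltr_pdivlMr; last lra.
have : m * (m ^+ 2 - l ^+ 2) - (n * m + e2 - 2) * s = c * h + 2 * s by rewrite /h; lra.
lra.
Qed.

End TuranRoots.

Theorem lemma3p4 (r s n : nat) (hr : (1 <= r)%N) (hs : (1 <= s)%N) (hn : (1 <= n)%N)
  (lam mu : algC) :
  is_spectral_radius (adjmx (turan_adj r n)) lam ->
  is_spectral_radius (adjmx (join_indep_turan_adj s r n)) mu ->
  let d0 : algC := 2 * ((nedges (turan_adj r n))%:R - 1) / n%:R in
  n%:R * (mu + d0) / (mu ^+ 2 - lam ^+ 2) < mu / s%:R.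
Proof.
move=> lam_rad mu_rad /=.
have nE := natr_divn_eq algR n r.
have t_lt_r : (n %% r)%:R + 1 <= r%:R :> algR by rewrite natr1 ler_nat ltn_pmod.
have [a_ge0 t_ge0] : 0 <= (n %/ r)%:R :> algR /\ 0 <= (n %% r)%:R :> algR.
  by rewrite !ler0n.
have [n_ge1 s_ge1] : 1 <= n%:R :> algR /\ 1 <= s%:R :> algR by rewrite !ler1n.
have [l [l_ge0 c_le lE Sl]] := turan_root_exists a_ge0 t_ge0 t_lt_r nE n_ge1.
have [m [l_lt_m Sm mE]] :=
  join_root_exists a_ge0 t_ge0 t_lt_r nE n_ge1 s_ge1 l_ge0 c_le lE.
have -> : lam = algRval l.
  apply: (turan_spectral_radius hr hn l_ge0 _ lam_rad).
  have Sl1 : turan_secular r n l = 1 by rewrite turan_secularE.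
  by rewrite -fmorph_turan_secular Sl1 rmorph1.
have -> : mu = algRval m.
  apply: (join_spectral_radius hr hs (le_lt_trans l_ge0 l_lt_m) _ mu_rad).
  have Sm1 : turan_secular r n m = m / (m + s%:R) by rewrite turan_secularE.
  by rewrite -fmorph_turan_secular Sm1 fmorph_div rmorphD rmorph_nat.
have gap_ge0 := gap_ge0_nat nE erefl erefl erefl (ltn_pmod n hr).
have := join_root_ineq a_ge0 t_ge0 t_lt_r nE n_ge1 s_ge1 l_ge0 c_le lE l_lt_m mE gap_ge0.
(* The order of algR is the order of algC restricted to the reals. *)
rewrite -(nedges_turan algR n hr) natrM mulrBr mulr1 -[_ < _]/(algRval _ < algRval _).
by rewrite !(rmorphM, fmorphV, rmorphD, rmorphN, rmorphB, rmorphXn, rmorph_nat, rmorph1).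
Qed.
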